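(* Let $n\ge1$. For any ultrametric tree with $n$ leaves whose common distance from the root is $1$, with leaf distance matrix $D$, the matrix \[ \Big(1-\frac1n\Big)\mathbf{1}_{n\times n}-\frac12 D \] is positive semidefinite. Moreover, $1-\frac1n$ is the smallest such constant: for every real $c<1-\frac1n$ there is an ultrametric tree with $n$ leaves at common distance $1$ from the root for which $c\,\mathbf{1}_{n\times n}-\frac12 D$ is not positive semidefinite.
   Context: An ultrametric tree is a rooted tree with nonnegative edge lengths such that all leaves are at the same distance from the root; the distance between two vertices is the sum of edge lengths along the unique path joining them. For a tree with leaves labeled $1,\dots,n$, the leaf distance matrix $D$ is the $n\times n$ matrix whose $(i,j)$ entry is the distance between leaves $i$ and $j$. $\mathbf{1}_{n\times n}$ is the $n\times n$ all-ones matrix. *)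

From HB Require Import structures.
From mathcomp Require Import all_boot all_order all_algebra.
From mathcomp Require Import reals.
Set Implicit Arguments. Unset Strict Implicit. Unset Printing Implicit Defensive.
Import Order.TTheory GRing.Theory Num.Theory.
Local Open Scope ring_scope.

Section Trees.
Variable R : realType.
Variable V : finType.

(* A rooted tree on the finite vertex set V is given by a root r and a parent
   map par (with par r = r); the edges are {v, par v} for v <> r, and v's edge
   to its parent has length w v. *)

Definition anc (par : V -> V) (x u : V) : bool :=
  [exists k : 'I_#|V|.+1, iter k par u == x].

Definition is_rooted_tree (r : V) (par : V -> V) : Prop :=
  par r = r /\ forall v, anc par r v.

Definition is_leaf (par : V -> V) (v : V) : bool :=
  [forall u, (par u == v) ==> (u == v)].

(* Length of the unique path joining u and v: the edge (x, par x), x <> r,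
   lies on that path iff x is an ancestor-or-self of exactly one of u, v. *)
Definition tdist (r : V) (par : V -> V) (w : V -> R) (u v : V) : R :=
  \sum_(x | (x != r) && (anc par x u != anc par x v)) w x.

Definition ultrametric_tree1 (n : nat) (r : V) (par : V -> V) (w : V -> R)
    (lab : 'I_n -> V) : Prop :=
  is_rooted_tree r par /\
  (forall v, 0 <= w v) /\
  injective lab /\
  (forall i, is_leaf par (lab i)) /\
  (forall v, is_leaf par v -> exists i, lab i = v) /\
  (forall v, is_leaf par v -> tdist r par w r v = 1).

Definition leaf_dist_mx (n : nat) (r : V) (par : V -> V) (w : V -> R)
    (lab : 'I_n -> V) : 'M[R]_n :=
  \matrix_(i, j) tdist r par w (lab i) (lab j).

End Trees.

Definition psd (R : realType) (n : nat) (A : 'M[R]_n) : Prop :=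
  forall x : 'cV[R]_n, 0 <= (x^T *m A *m x) 0 0.

(* Since every leaf has depth 1, the distance between leaves i and j is
   2 - 2 h(i, j), where h(i, j) is the total length of the edges above both.
   Hence the quadratic form of c J - D/2 at x is
   sum_v w_v s_v^2 - (1 - c) (sum_i x_i)^2, where v runs over the non-root
   vertices, w_v is the length of the edge above v and s_v is the sum of x over
   the leaves below v.  The identity sum_v w_v s_v = sum_i x_i together with
   Cauchy-Schwarz over the vertices above some leaf, whose weights add up to at
   most n, gives (sum_i x_i)^2 <= n sum_v w_v s_v^2: the form is nonnegative
   for c = 1 - 1/n.  For the star with n unit edges and x = (1, ..., 1) the form
   equals n - (1 - c) n^2, which is negative when c < 1 - 1/n. *)

From HB Require Import structures.
From mathcomp Require Import all_boot all_order all_algebra.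
From mathcomp Require Import reals.
From mathcomp Require Import ring lra.
Set Implicit Arguments. Unset Strict Implicit. Unset Printing Implicit Defensive.
Import Order.TTheory GRing.Theory Num.Theory.
Local Open Scope ring_scope.

Lemma quad_formE (R : comPzRingType) (n : nat) (A : 'M[R]_n) (x : 'cV[R]_n) :
  (x^T *m A *m x) 0 0 = \sum_i \sum_j x i 0 * A i j * x j 0.
Proof.
rewrite mxE; under eq_bigr => j _ do rewrite mxE big_distrl /=.
rewrite exchange_big; apply: eq_bigr => i _.
by apply: eq_bigr => j _; rewrite mxE.
Qed.

Lemma quad_form_const1 (R : comPzRingType) (n : nat) (x : 'cV[R]_n) :
  (x^T *m const_mx 1 *m x) 0 0 = (\sum_i x i 0) ^+ 2.
Proof.
rewrite quad_formE expr2 big_distrl /=; apply: eq_bigr => i _.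
by rewrite big_distrr /=; apply: eq_bigr => j _; rewrite mxE mulr1.
Qed.

Lemma quad_form_gram (R : comPzRingType) (n : nat) (I : finType) (P : pred I)
    (w : I -> R) (a : I -> 'I_n -> R) (x : 'cV[R]_n) :
  (x^T *m (\matrix_(i, j) \sum_(v | P v) w v * (a v i * a v j)) *m x) 0 0 =
  \sum_(v | P v) w v * (\sum_i a v i * x i 0) ^+ 2.
Proof.
rewrite quad_formE.
under eq_bigr => i _ do
  under eq_bigr => j _ do rewrite mxE big_distrr big_distrl /=.
under eq_bigr => i _ do rewrite exchange_big /=.
rewrite exchange_big /=; apply: eq_bigr => v _.
rewrite expr2 big_distrl big_distrr /=; apply: eq_bigr => i _.
rewrite big_distrr big_distrr /=; apply: eq_bigr => j _; ring.
Qed.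

Lemma weighted_cauchy_schwarz (R : realDomainType) (I : finType) (P : pred I)
    (w a b : I -> R) :
  (forall i, P i -> 0 <= w i) ->
  (\sum_(i | P i) w i * (a i * b i)) ^+ 2 <=
  (\sum_(i | P i) w i * a i ^+ 2) * (\sum_(i | P i) w i * b i ^+ 2).
Proof.
move=> w_ge0.
pose F i j := w i * a i ^+ 2 * (w j * b j ^+ 2).
pose G i j := w i * (a i * b i) * (w j * (a j * b j)).
have Lagrange_identity :
    \sum_(i | P i) \sum_(j | P j) w i * w j * (a i * b j - a j * b i) ^+ 2 =
    2 * ((\sum_(i | P i) w i * a i ^+ 2) * (\sum_(i | P i) w i * b i ^+ 2)
         - (\sum_(i | P i) w i * (a i * b i)) ^+ 2).
  transitivity (\sum_(i | P i) \sum_(j | P j) (F i j + F j i - G i j *+ 2)).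
    by apply: eq_bigr => i _; apply: eq_bigr => j _; rewrite /F /G; ring.
  under eq_bigr => i _ do rewrite sumrB big_split sumrMnl /=.
  rewrite sumrB big_split sumrMnl /= [X in _ + X - _]exchange_big /=.
  rewrite expr2 !big_distrl /=.
  under [in RHS]eq_bigr => i _ do rewrite big_distrr /=.
  under [X in _ = _ * (_ - X)]eq_bigr => i _ do rewrite big_distrr /=.
  by rewrite -mulr_natl; ring.
rewrite -subr_ge0 -(pmulr_rge0 _ (ltr0Sn _ 1)) -Lagrange_identity.
apply: sumr_ge0 => i Pi; apply: sumr_ge0 => j Pj.
by rewrite mulr_ge0 ?sqr_ge0 ?mulr_ge0 ?w_ge0.
Qed.

Section RootedTree.
Variables (R : realType) (V : finType) (r : V) (par : V -> V) (w : V -> R).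
Hypothesis par_r : par r = r.

Lemma anc_rootF v : v != r -> anc par v r = false.
Proof.
move=> v_neq_r; apply/existsP => -[k].
have iter_r m : iter m par r = r by elim: m => //= m ->.
by rewrite iter_r eq_sym (negbTE v_neq_r).
Qed.

Lemma tdist_rootl u :
  tdist r par w r u = \sum_(v | (v != r) && anc par v u) w v.
Proof.
apply: eq_bigl => v; case: (eqVneq v r) => //= v_neq_r.
by rewrite anc_rootF //; case: (anc par v u).
Qed.

Lemma tdist_depth u u' :
  tdist r par w u u' =
  tdist r par w r u + tdist r par w r u'
  - 2 * \sum_(v | [&& v != r, anc par v u & anc par v u']) w v.
Proof.
rewrite !tdist_rootl /tdist !big_mkcondr /= mulr_sumr -big_split -sumrB /=.
by apply: eq_bigr => v _; case: (anc par v u); case: (anc par v u') => /=; ring.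
Qed.

Variables (n : nat) (lab : 'I_n -> V).

Definition subtree_sum (x : 'cV[R]_n) (v : V) : R :=
  \sum_(i | anc par v (lab i)) x i 0.

Hypothesis leaf_depth1 : forall i, tdist r par w r (lab i) = 1.

Lemma half_leaf_dist_mx :
  2^-1 *: leaf_dist_mx r par w lab =
  const_mx 1 - \matrix_(i, j) \sum_(v | v != r)
                 w v * ((anc par v (lab i))%:R * (anc par v (lab j))%:R).
Proof.
apply/matrixP => i j; rewrite !mxE tdist_depth !leaf_depth1 big_mkcondr /=.
have common_anc v : (if anc par v (lab i) && anc par v (lab j) then w v else 0)
    = w v * ((anc par v (lab i))%:R * (anc par v (lab j))%:R).
  by case: (anc par v (lab i)); case: (anc par v (lab j)); rewrite ?mulr1 ?mulr0.
under eq_bigr => v _ do rewrite common_anc.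
by field.
Qed.

Lemma quad_form_leaf_dist (c : R) (x : 'cV[R]_n) :
  (x^T *m (c *: const_mx 1 - 2^-1 *: leaf_dist_mx r par w lab) *m x) 0 0 =
  \sum_(v | v != r) w v * subtree_sum x v ^+ 2 - (1 - c) * (\sum_i x i 0) ^+ 2.
Proof.
rewrite half_leaf_dist_mx.
set G := \matrix_(i, j) _.
have -> : c *: const_mx 1 - (const_mx 1 - G) = G - (1 - c) *: const_mx 1.
  by apply/matrixP => i j; rewrite !mxE; ring.
rewrite mulmxBr mulmxBl -scalemxAr -scalemxAl mxE [X in _ + X]mxE [X in - X]mxE.
rewrite /G quad_form_gram quad_form_const1; congr (_ - _).
apply: eq_bigr => v _; rewrite /subtree_sum [in RHS]big_mkcond /=.
congr (_ * _ ^+ 2); apply: eq_bigr => i _.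
by case: (anc par v (lab i)); rewrite ?mul1r ?mul0r.
Qed.

Lemma sum_weighted_subtree_sum (x : 'cV[R]_n) :
  \sum_(v | v != r) w v * subtree_sum x v = \sum_i x i 0.
Proof.
under eq_bigr => v _ do rewrite /subtree_sum mulr_sumr.
rewrite (exchange_big_dep xpredT) //=; apply: eq_bigr => i _.
by rewrite -mulr_suml -tdist_rootl leaf_depth1 mul1r.
Qed.

Hypothesis w_ge0 : forall v, 0 <= w v.

Lemma sum_weight_above_leaves_le :
  \sum_(v | (v != r) && [exists i, anc par v (lab i)]) w v <= n%:R.
Proof.
have -> : n%:R = \sum_i \sum_(v | (v != r) && anc par v (lab i)) w v :> R.
  rewrite (eq_bigr (fun=> 1)) ?sumr_const ?card_ord // => i _.
  by rewrite -tdist_rootl leaf_depth1.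
rewrite (exchange_big_dep (fun v => v != r)) => [|i v _ /andP[] //].
rewrite big_mkcondr /=; apply: ler_sum => v v_neq_r.
case: existsP => [[i0 anc_i0] | _]; last by apply: sumr_ge0.
by rewrite (bigD1 i0) /= ?v_neq_r // lerDl sumr_ge0.
Qed.

Lemma sqr_sum_le_weighted_subtree_sums (x : 'cV[R]_n) :
  (\sum_i x i 0) ^+ 2 <= n%:R * \sum_(v | v != r) w v * subtree_sum x v ^+ 2.
Proof.
pose P v := (v != r) && [exists i, anc par v (lab i)].
have restrictP (f : R -> R) : f 0 = 0 ->
    \sum_(v | v != r) w v * f (subtree_sum x v) =
    \sum_(v | P v) w v * f (subtree_sum x v).
  move=> f0; rewrite [RHS]big_mkcondr /=; apply: eq_bigr => v _.
  case: existsP => // no_leaf.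
  rewrite /subtree_sum big_pred0 ?f0 ?mulr0 // => i.
  by apply/negbTE/negP => anc_i; apply: no_leaf; exists i.
rewrite -sum_weighted_subtree_sum (restrictP id) //.
rewrite (restrictP (fun t => t ^+ 2)) ?expr0n //.
have := weighted_cauchy_schwarz (fun=> 1) (subtree_sum x)
          (fun v (_ : P v) => w_ge0 v).
under eq_bigr => v _ do rewrite mul1r.
under [X in _ <= X * _]eq_bigr => v _ do rewrite expr1n mulr1.
move/le_trans; apply; apply: ler_wpM2r; last exact: sum_weight_above_leaves_le.
by apply: sumr_ge0 => v _; rewrite mulr_ge0 ?sqr_ge0.
Qed.

End RootedTree.

Section StarTree.
Variables (R : realType) (n : nat).

Definition star_par (v : option 'I_n) : option 'I_n := None.

Definition star_w (v : option 'I_n) : R := (v != None)%:R.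

Lemma star_anc_None v : anc star_par None v.
Proof. by apply/existsP; exists (inord 1); rewrite inordK // card_option. Qed.

Lemma star_anc_Some j v : anc star_par (Some j) v = (v == Some j).
Proof.
by apply/existsP/eqP => [[[[|k] _]] /= /eqP | ->] //; exists ord0.
Qed.

Lemma star_depth i : tdist None star_par star_w None (Some i) = 1.
Proof.
rewrite tdist_rootl // (eq_bigl (pred1 (Some i))) ?big_pred1_eq // => -[j|] //=.
by rewrite star_anc_Some eq_sym.
Qed.

Hypothesis n_gt0 : (0 < n)%N.

Lemma star_ultrametric : ultrametric_tree1 None star_par star_w Some.
Proof.
have not_leaf_None : ~~ is_leaf star_par None.
  by apply/forallP => /(_ (Some (Ordinal n_gt0))).
split; first by split=> // v; apply: star_anc_None.
split; first by move=> v; rewrite ler0n.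
split; first by move=> i j [].
split; first by move=> i; apply/forallP.
split; case=> [j|] leaf_v; try by rewrite leaf_v in not_leaf_None.
  by exists j.
exact: star_depth.
Qed.

Lemma star_subtree_sum_const1 j :
  subtree_sum star_par Some (const_mx 1 : 'cV[R]_n) (Some j) = 1.
Proof.
rewrite /subtree_sum (eq_bigl (pred1 j)) ?big_pred1_eq ?mxE // => i.
by rewrite star_anc_Some /=.
Qed.

Lemma star_not_psd (c : R) : c < 1 - n%:R^-1 ->
  ~ psd (c *: const_mx 1 - 2^-1 *: leaf_dist_mx None star_par star_w Some).
Proof.
move=> c_lt /(_ (const_mx 1)).
have par_None : star_par None = None by [].
have sum1 : \sum_i (const_mx 1 : 'cV[R]_n) i 0 = n%:R.
  by under eq_bigr do rewrite mxE; rewrite sumr_const card_ord.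
rewrite (quad_form_leaf_dist par_None star_depth) sum1.
have -> : \sum_(v | v != None)
    star_w v * subtree_sum star_par Some (const_mx 1 : 'cV[R]_n) v ^+ 2 = n%:R.
  rewrite -sum1 -(sum_weighted_subtree_sum par_None star_depth).
  by apply: eq_bigr => -[j|] // _; rewrite star_subtree_sum_const1 expr1n.
have n_pos : (0 : R) < n%:R by rewrite ltr0n.
have : c * n%:R < n%:R - 1.
  by move: c_lt; rewrite -(ltr_pM2r n_pos) mulrBl mul1r mulVf ?lt0r_neq0.
nra.
Qed.

End StarTree.

Theorem theorem1p8 (R : realType) (n : nat) (hn : (1 <= n)%N) :
  (forall (V : finType) (r : V) (par : V -> V) (w : V -> R) (lab : 'I_n -> V),
      ultrametric_tree1 r par w lab ->
      psd ((1 - n%:R^-1) *: const_mx 1 - 2^-1 *: leaf_dist_mx r par w lab))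
  /\
  (forall c : R, c < 1 - n%:R^-1 ->
     exists (V : finType) (r : V) (par : V -> V) (w : V -> R) (lab : 'I_n -> V),
       ultrametric_tree1 r par w lab /\
       ~ psd (c *: const_mx 1 - 2^-1 *: leaf_dist_mx r par w lab)).
Proof.
split=>
  [V r par w lab [[par_r _] [w_ge0 [_ [lab_leaf [_ leaf_depth]]]]] x | c c_lt].
  have leaf_depth1 i := leaf_depth _ (lab_leaf i).
  rewrite (quad_form_leaf_dist par_r leaf_depth1) subKr subr_ge0.
  rewrite ler_pdivrMl ?ltr0n //.
  exact: sqr_sum_le_weighted_subtree_sums.
exists (option 'I_n), None, (@star_par n), (@star_w R n), Some.
by split; [exact: star_ultrametric | exact: star_not_psd].
Qed.
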